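(* Let $I\subseteq\mathbb{R}$ be an interval, $X\subseteq I$, $q,r\ge0$, and let $f:X\to\mathbb{R}$ be strictly increasing or strictly decreasing. If every bounded gap of $X$ has length less than $q$ and every bounded gap of $f(X)$ has length less than $r$, then $f$ is $r$-continuous on $X$.
   Context: A gap of a set $X\subseteq\mathbb{R}$ is a nonempty interval $J\subseteq\mathbb{R}$ containing no point of $X$ such that no interval strictly containing $J$ has this property; its length is $\sup J-\inf J$. For $D\subseteq\mathbb{R}$, $f:D\to\mathbb{R}$ and $r\ge 0$: $f$ is $r$-continuous at $a\in D$ if for every $\varepsilon>0$ there is $\delta>0$ such that for all $x\in D$ with $|x-a|<\delta$ one has $|f(x)-f(a)|<r+\varepsilon$; $f$ is $r$-continuous on $D$ if it is $r$-continuous at every point of $D$. *)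

From Stdlib Require Import Reals Lra.
Open Scope R_scope.

Definition is_interval (J : R -> Prop) : Prop :=
  forall x y z, J x -> J z -> x <= y -> y <= z -> J y.

Definition is_gap (X J : R -> Prop) : Prop :=
  (exists x, J x) /\ is_interval J /\ (forall x, J x -> ~ X x) /\
  (forall J' : R -> Prop,
     is_interval J' -> (forall x, J x -> J' x) -> (exists x, J' x /\ ~ J x) ->
     ~ (forall x, J' x -> ~ X x)).

Definition is_glb (E : R -> Prop) (m : R) : Prop :=
  (forall x, E x -> m <= x) /\ (forall m', (forall x, E x -> m' <= x) -> m' <= m).

Definition bounded_set (E : R -> Prop) : Prop :=
  (exists M, forall x, E x -> x <= M) /\ (exists m, forall x, E x -> m <= x).

Definition length_lt (J : R -> Prop) (q : R) : Prop :=
  exists a b, is_glb J a /\ is_lub J b /\ b - a < q.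

Definition image (f : R -> R) (X : R -> Prop) : R -> Prop :=
  fun y => exists x, X x /\ f x = y.

Definition strictly_increasing_on (X : R -> Prop) (f : R -> R) : Prop :=
  forall x y, X x -> X y -> x < y -> f x < f y.

Definition strictly_decreasing_on (X : R -> Prop) (f : R -> R) : Prop :=
  forall x y, X x -> X y -> x < y -> f y < f x.

Definition r_continuous_at (D : R -> Prop) (f : R -> R) (r a : R) : Prop :=
  forall eps, 0 < eps -> exists delta, 0 < delta /\
    forall x, D x -> Rabs (x - a) < delta -> Rabs (f x - f a) < r + eps.

Definition r_continuous_on (D : R -> Prop) (f : R -> R) (r : R) : Prop :=
  forall a, D a -> r_continuous_at D f r a.

(* Fix a in X and eps > 0.  By monotonicity it suffices to find, on each side
   of a, a point of X whose value lies within r + eps of f a, unless X has no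
   points on that side at all.  For increasing f and the right side: if no such
   point exists but X has points right of a, then every value of f above f a is
   at least f a + r + eps, so the points just above f a form a bounded gap of
   f(X) of length at least r + eps, contradicting the hypothesis on f(X).  The
   left side and decreasing f reduce to this case through the reflections
   x |-> -x and y |-> -y. *)

From Stdlib Require Import Reals Lra Classical FunctionalExtensionality PropExtensionality.
Open Scope R_scope.

Definition short_gaps (Y : R -> Prop) (r : R) : Prop :=
  forall J, is_gap Y J -> bounded_set J -> length_lt J r.

Definition opp_set (S : R -> Prop) : R -> Prop := fun y => S (- y).

Lemma opp_setK (S : R -> Prop) : opp_set (opp_set S) = S.
Proof.
  apply functional_extensionality; intro y. unfold opp_set. now rewrite Ropp_involutive.
Qed.

Lemma is_interval_opp (J : R -> Prop) : is_interval J -> is_interval (opp_set J).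
Proof. intros HJ x y z Jx Jz xy yz. apply (HJ (- z) (- y) (- x)); auto; lra. Qed.

Lemma is_gap_opp (Y J : R -> Prop) : is_gap Y J -> is_gap (opp_set Y) (opp_set J).
Proof.
  intros [[x Jx] [HJ [HY Hmax]]].
  split; [exists (- x); unfold opp_set; now rewrite Ropp_involutive |].
  split; [exact (is_interval_opp J HJ) |].
  split; [intros y Jy; exact (HY _ Jy) |].
  intros J' HJ' Hsub [w [J'w nJw]] Hdisj.
  apply (Hmax (opp_set J')).
  - exact (is_interval_opp J' HJ').
  - intros y Jy. apply Hsub. unfold opp_set. now rewrite Ropp_involutive.
  - exists (- w). unfold opp_set. now rewrite Ropp_involutive.
  - intros y J'y. specialize (Hdisj (- y) J'y). unfold opp_set in Hdisj.
    now rewrite Ropp_involutive in Hdisj.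
Qed.

Lemma bounded_set_opp (J : R -> Prop) : bounded_set J -> bounded_set (opp_set J).
Proof.
  intros [[M HM] [m Hm]].
  split; [exists (- m) | exists (- M)]; intros x Jx;
    [specialize (Hm _ Jx) | specialize (HM _ Jx)]; lra.
Qed.

Lemma is_glb_opp (J : R -> Prop) (b : R) : is_lub J b -> is_glb (opp_set J) (- b).
Proof.
  intros [Hub Hleast]. split.
  - intros x Jx. specialize (Hub _ Jx). lra.
  - intros m Hm. enough (b <= - m) by lra. apply Hleast. intros x Jx.
    enough (m <= - x) by lra. apply Hm. unfold opp_set. now rewrite Ropp_involutive.
Qed.

Lemma is_lub_opp (J : R -> Prop) (a : R) : is_glb J a -> is_lub (opp_set J) (- a).
Proof.
  intros [Hlb Hgreatest]. split.
  - intros x Jx. specialize (Hlb _ Jx). lra.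
  - intros M HM. enough (- M <= a) by lra. apply Hgreatest. intros x Jx.
    enough (- x <= M) by lra. apply HM. unfold opp_set. now rewrite Ropp_involutive.
Qed.

Lemma length_lt_opp (J : R -> Prop) (r : R) : length_lt J r -> length_lt (opp_set J) r.
Proof.
  intros [a [b [Ha [Hb Hlen]]]]. exists (- b), (- a).
  split; [exact (is_glb_opp J b Hb) | split; [exact (is_lub_opp J a Ha) | lra]].
Qed.

Lemma short_gaps_opp (Y : R -> Prop) (r : R) : short_gaps Y r -> short_gaps (opp_set Y) r.
Proof.
  intros HY J HJ Hb. rewrite <- (opp_setK J). apply length_lt_opp, HY.
  - rewrite <- (opp_setK Y). exact (is_gap_opp _ _ HJ).
  - exact (bounded_set_opp J Hb).
Qed.

Definition gap_right_of (Y : R -> Prop) (c : R) : R -> Prop :=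
  fun y => c < y /\ ~ Y y /\ forall z, Y z -> c < z -> y <= z.

Lemma gap_right_of_is_gap (Y : R -> Prop) (c y0 : R) :
  Y c -> gap_right_of Y c y0 -> is_gap Y (gap_right_of Y c).
Proof.
  intros Yc Gy0. split; [now exists y0 |]. split; [| split].
  - intros x y z [cx _] [_ [nYz Hz]] xy yz. split; [lra | split].
    + intro Yy. assert (z <= y) by (apply Hz; [exact Yy | lra]).
      replace y with z in Yy by lra. contradiction.
    + intros w Yw cw. specialize (Hz w Yw cw). lra.
  - now intros x [_ [nYx _]].
  (* A strictly larger interval either reaches down to c, or past a point of
     Y above c, or its new point w already belongs to the gap. *)
  - intros J' HJ' Hsub [w [J'w nGw]] Hdisj.
    assert (J'y0 : J' y0) by (apply Hsub; exact Gy0).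
    destruct (Rle_lt_dec w c) as [wc | cw].
    + apply (Hdisj c); [| exact Yc].
      destruct Gy0 as [cy0 _]. apply (HJ' w c y0); auto; lra.
    + destruct (classic (exists z, Y z /\ c < z /\ z < w)) as [[z [Yz [cz zw]]] | Hnone].
      * destruct Gy0 as [_ [_ Hy0]]. specialize (Hy0 z Yz cz).
        apply (Hdisj z); [apply (HJ' y0 z w); auto; lra | exact Yz].
      * apply nGw. split; [exact cw | split].
        -- intro Yw. exact (Hdisj w J'w Yw).
        -- intros z Yz cz. apply Rnot_lt_le. intro zw. apply Hnone. now exists z.
Qed.

Lemma gap_right_of_bounded (Y : R -> Prop) (c z : R) :
  Y z -> c < z -> bounded_set (gap_right_of Y c).
Proof.
  intros Yz cz. split; [exists z | exists c]; intros x [cx [_ Hx]]; [now apply Hx | lra].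
Qed.

Lemma no_wide_gap_right (Y : R -> Prop) (c r eps : R) :
  Y c -> 0 <= r -> 0 < eps -> short_gaps Y r ->
  (forall z, Y z -> c < z -> c + r + eps <= z) ->
  forall z, Y z -> z <= c.
Proof.
  intros Yc Hr He Hgaps Hwide z Yz. apply Rnot_lt_le. intro cz.
  assert (HG : forall y, c < y < c + r + eps -> gap_right_of Y c y).
  { intros y [cy yc]. split; [exact cy | split].
    - intro Yy. specialize (Hwide y Yy cy). lra.
    - intros w Yw cw. specialize (Hwide w Yw cw). lra. }
  destruct (Hgaps (gap_right_of Y c)) as [m [b [[Hm _] [[Hb _] Hlen]]]].
  - apply (gap_right_of_is_gap Y c (c + eps / 2)); [exact Yc | apply HG; lra].
  - exact (gap_right_of_bounded Y c z Yz cz).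
  - assert (m <= c + eps / 4) by (apply Hm, HG; lra).
    assert (c + r + eps / 2 <= b) by (apply Hb, HG; lra).
    lra.
Qed.

Lemma strictly_increasing_on_lt_inv (X : R -> Prop) (f : R -> R) (x y : R) :
  strictly_increasing_on X f -> X x -> X y -> f x < f y -> x < y.
Proof.
  intros Hf Xx Xy fxy. destruct (Rlt_le_dec x y) as [xy | yx]; [exact xy |].
  destruct (Rle_lt_or_eq_dec _ _ yx) as [yx' | <-]; [specialize (Hf _ _ Xy Xx yx') |]; lra.
Qed.

Lemma right_bound_incr (X : R -> Prop) (f : R -> R) (r eps a : R) :
  strictly_increasing_on X f -> short_gaps (image f X) r -> 0 <= r -> 0 < eps -> X a ->
  exists d, 0 < d /\ forall x, X x -> a < x < a + d -> Rabs (f x - f a) < r + eps.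
Proof.
  intros Hf Hgaps Hr He Xa.
  destruct (classic (exists x0, X x0 /\ a < x0 /\ f x0 < f a + r + eps))
    as [[x0 [Xx0 [ax0 fx0]]] | Hnone].
  - exists (x0 - a). split; [lra |]. intros x Xx hx.
    assert (f a < f x) by (apply Hf; auto; lra).
    assert (f x < f x0) by (apply Hf; auto; lra).
    rewrite Rabs_right; lra.
  - exists 1. split; [lra |]. intros x Xx [ax _]. exfalso.
    assert (Hwide : forall z, image f X z -> f a < z -> f a + r + eps <= z).
    { intros z [y [Xy <-]] hy. apply Rnot_lt_le. intro hyr. apply Hnone.
      exists y. split; [exact Xy | split; [| exact hyr]].
      exact (strictly_increasing_on_lt_inv X f a y Hf Xa Xy hy). }
    assert (f x <= f a).
    { apply (no_wide_gap_right (image f X) (f a) r eps); auto; [exists a | exists x]; auto. }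
    specialize (Hf a x Xa Xx ax). lra.
Qed.

Lemma strictly_increasing_on_conj_opp (X : R -> Prop) (f : R -> R) :
  strictly_increasing_on X f -> strictly_increasing_on (opp_set X) (fun x => - f (- x)).
Proof.
  intros Hf x y Xx Xy xy. specialize (Hf (- y) (- x) Xy Xx ltac:(lra)). lra.
Qed.

Lemma image_conj_opp (X : R -> Prop) (f : R -> R) :
  image (fun x => - f (- x)) (opp_set X) = opp_set (image f X).
Proof.
  apply functional_extensionality; intro y. apply propositional_extensionality.
  unfold image, opp_set. split.
  - intros [x [Xx <-]]. exists (- x). split; [exact Xx | ring].
  - intros [x [Xx fx]]. exists (- x). rewrite Ropp_involutive. split; [exact Xx | lra].
Qed.

Lemma left_bound_incr (X : R -> Prop) (f : R -> R) (r eps a : R) :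
  strictly_increasing_on X f -> short_gaps (image f X) r -> 0 <= r -> 0 < eps -> X a ->
  exists d, 0 < d /\ forall x, X x -> a - d < x < a -> Rabs (f x - f a) < r + eps.
Proof.
  intros Hf Hgaps Hr He Xa.
  destruct (right_bound_incr (opp_set X) (fun x => - f (- x)) r eps (- a)) as [d [hd Hd]].
  - exact (strictly_increasing_on_conj_opp X f Hf).
  - rewrite image_conj_opp. exact (short_gaps_opp _ r Hgaps).
  - exact Hr.
  - exact He.
  - unfold opp_set. now rewrite Ropp_involutive.
  - exists d. split; [exact hd |]. intros x Xx hx.
    specialize (Hd (- x)). unfold opp_set in Hd. rewrite !Ropp_involutive in Hd.
    rewrite Rabs_minus_sym. replace (f a - f x) with (- f x - - f a) by ring.
    apply Hd; [exact Xx | lra].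
Qed.

Lemma r_continuous_at_of_sides (D : R -> Prop) (f : R -> R) (r a : R) :
  0 <= r ->
  (forall eps, 0 < eps -> exists d, 0 < d /\
     forall x, D x -> a < x < a + d -> Rabs (f x - f a) < r + eps) ->
  (forall eps, 0 < eps -> exists d, 0 < d /\
     forall x, D x -> a - d < x < a -> Rabs (f x - f a) < r + eps) ->
  r_continuous_at D f r a.
Proof.
  intros Hr Hright Hleft eps He.
  destruct (Hright eps He) as [d1 [hd1 H1]], (Hleft eps He) as [d2 [hd2 H2]].
  exists (Rmin d1 d2). split; [now apply Rmin_pos |].
  intros x Dx hx. apply Rabs_def2 in hx.
  pose proof (Rmin_l d1 d2). pose proof (Rmin_r d1 d2).
  destruct (Rtotal_order x a) as [xa | [-> | ax]].
  - apply H2; [exact Dx | lra].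
  - unfold Rminus. rewrite Rplus_opp_r, Rabs_R0. lra.
  - apply H1; [exact Dx | lra].
Qed.

Lemma r_continuous_on_incr (X : R -> Prop) (f : R -> R) (r : R) :
  strictly_increasing_on X f -> short_gaps (image f X) r -> 0 <= r ->
  r_continuous_on X f r.
Proof.
  intros Hf Hgaps Hr a Xa.
  apply r_continuous_at_of_sides; [exact Hr | |]; intros eps He;
    [apply right_bound_incr | apply left_bound_incr]; assumption.
Qed.

Lemma image_opp (X : R -> Prop) (f : R -> R) :
  image (fun x => - f x) X = opp_set (image f X).
Proof.
  apply functional_extensionality; intro y. apply propositional_extensionality.
  unfold image, opp_set. split.
  - intros [x [Xx <-]]. exists x. split; [exact Xx | ring].
  - intros [x [Xx fx]]. exists x. split; [exact Xx | lra].
Qed.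

Lemma r_continuous_on_opp (X : R -> Prop) (f : R -> R) (r : R) :
  r_continuous_on X (fun x => - f x) r -> r_continuous_on X f r.
Proof.
  intros H a Xa eps He. destruct (H a Xa eps He) as [d [hd Hd]].
  exists d. split; [exact hd |]. intros x Xx hx.
  rewrite <- Rabs_Ropp. replace (- (f x - f a)) with (- f x - - f a) by ring.
  exact (Hd x Xx hx).
Qed.

Theorem theorem8 (I X : R -> Prop) (q r : R) (f : R -> R) :
  is_interval I ->
  (forall x, X x -> I x) ->
  0 <= q -> 0 <= r ->
  (strictly_increasing_on X f \/ strictly_decreasing_on X f) ->
  (forall J, is_gap X J -> bounded_set J -> length_lt J q) ->
  (forall J, is_gap (image f X) J -> bounded_set J -> length_lt J r) ->
  r_continuous_on X f r.
Proof.
  intros _ _ _ Hr [Hinc | Hdec] _ Hgaps.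
  - exact (r_continuous_on_incr X f r Hinc Hgaps Hr).
  - apply r_continuous_on_opp, r_continuous_on_incr; [| | exact Hr].
    + intros x y Xx Xy xy. specialize (Hdec x y Xx Xy xy). lra.
    + rewrite image_opp. exact (short_gaps_opp _ r Hgaps).
Qed.
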